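(* Let $\mathbb{F}$ be a field, $\mathbb{F}(T)$ the field of rational functions in $T$, and $H=\{h\in\mathbb{F}(T)\mid h \text{ is defined at } 1 \text{ and } h(1)=1\}$. Let $G$ be the set of matrices $\begin{pmatrix}1&f\\0&h\end{pmatrix}$ with $f\in\mathbb{F}(T)$, $h\in H$. Then $G$ is a group under matrix multiplication, the center of $G$ is trivial (so $G$ is not nilpotent), and $[e]_g$ is a subgroup of $G$ for every $g\in G$.
   Context: For $g\in G$, $[e]_g=\{[x,g]\mid x\in G\}$ with $[x,y]=x^{-1}y^{-1}xy$; this is the twisted conjugacy class of the unit element for the inner automorphism $x\mapsto g^{-1}xg$. *)

From HB Require Import structures.
From mathcomp Require Import all_boot all_order all_algebra.
Set Implicit Arguments. Unset Strict Implicit. Unset Printing Implicit Defensive.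
Import GRing.Theory.
Local Open Scope ring_scope.

Definition ratfun (F : fieldType) := {fraction {poly F}}.

Definition polyF (F : fieldType) (p : {poly F}) : ratfun F :=
  @FracField.tofrac _ p.

(* h is defined at 1 with h(1) = 1: h = p/q with q(1) <> 0 and p(1)/q(1) = 1. *)
Definition inH (F : fieldType) (h : ratfun F) : Prop :=
  exists p q : {poly F}, q.[1] != 0 /\ p.[1] = q.[1] /\ h = polyF p / polyF q.

Definition mkG (F : fieldType) (f h : ratfun F) : 'M[ratfun F]_2 :=
  \matrix_(i < 2, j < 2)
     if i == 0 :> nat then (if j == 0 :> nat then 1 else f)
     else (if j == 0 :> nat then 0 else h).

Definition inG (F : fieldType) (A : 'M[ratfun F]_2) : Prop :=
  exists f h, inH h /\ A = mkG f h.

Definition commr (F : fieldType) (x y : 'M[ratfun F]_2) : 'M[ratfun F]_2 :=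
  x^-1 * y^-1 * x * y.

(* [e]_g = { [x, g] | x in G }. *)
Definition twclass (F : fieldType) (g : 'M[ratfun F]_2) (y : 'M[ratfun F]_2) : Prop :=
  exists x, inG x /\ y = commr x g.

(* In coordinates, G is the affine group t |-> h t + f of F(T) with linear parts h in H,
   and the commutator of (a, k) with g = (b, m) is the translation by a (m - 1) + b (1 - k).
   Since H is closed under k, k' |-> k + k' - 1 and k |-> 2 - k, these translation amounts
   form an additive subgroup of F(T), so [e]_g is a subgroup of the translations.
   Taking g = (1, 1) and g = (0, T) shows that a central element has k = 1 and
   a (T - 1) = 0, i.e. it is the identity. *)

From HB Require Import structures.
From mathcomp Require Import all_boot all_order all_algebra ring.
Import GRing.Theory.
Local Open Scope ring_scope.

Section AffineGroup.
Context {F : fieldType}.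
Implicit Types (f h a b k m t : ratfun F) (p q : {poly F}) (A B : 'M[ratfun F]_2).

Lemma mkG_mul f h f' h' : mkG f h * mkG f' h' = mkG (f' + f * h') (h * h').
Proof.
apply/matrixP => i j; rewrite !mxE big_ord_recl big_ord1 !mxE /=.
case: i => [[|[|//]] Hi] /=; case: j => [[|[|//]] Hj] /=;
  by rewrite ?mulr0 ?mul0r ?mulr1 ?mul1r ?addr0 ?add0r.
Qed.

Lemma mkG01 : mkG 0 1 = 1 :> 'M[ratfun F]_2.
Proof.
apply/matrixP => i j; rewrite !mxE.
by case: i => [[|[|//]] Hi] /=; case: j => [[|[|//]] Hj].
Qed.

Lemma mkG_inj f h f' h' : mkG f h = mkG f' h' -> f = f' /\ h = h'.
Proof. by move/matrixP => E; split; [have := E 0 1 | have := E 1 1]; rewrite !mxE. Qed.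

Lemma mkG_eq1 t : mkG t 1 = 1 -> t = 0.
Proof. by rewrite -mkG01 => /mkG_inj[]. Qed.

Lemma mkG_mulV f h : h != 0 -> mkG f h * mkG (- f / h) h^-1 = 1.
Proof. by move=> h0; rewrite mkG_mul mulNr addNr divff // mkG01. Qed.

Lemma mkG_Vmul f h : h != 0 -> mkG (- f / h) h^-1 * mkG f h = 1.
Proof. by move=> h0; rewrite mkG_mul !mulNr divfK // addrN mulVf // mkG01. Qed.

Lemma mkG_unit f h : h != 0 -> mkG f h \is a GRing.unit.
Proof.
by move=> h0; apply/GRing.unitrP; exists (mkG (- f / h) h^-1); rewrite mkG_mulV ?mkG_Vmul.
Qed.

Lemma mkG_inv f h : h != 0 -> (mkG f h)^-1 = mkG (- f / h) h^-1.
Proof. by move=> h0; rewrite -[LHS]mulr1 -(mkG_mulV f _ h0) mulKr ?mkG_unit. Qed.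

Lemma commr_eq (x y z : 'M[ratfun F]_2) :
  x \is a GRing.unit -> y \is a GRing.unit -> x * y = y * x * z -> commr x y = z.
Proof.
(* Side conditions on units are closed explicitly: [done] would try to decide them by
   computing on the concrete matrix ring, which does not terminate in practice. *)
move=> Ux Uy xy; have Uyx : y * x \is a GRing.unit by rewrite (unitrMr _ Uy); exact: Ux.
by rewrite /commr -mulrA xy -(invrM Uy Ux) (mulKr Uyx).
Qed.

Lemma commr_mkG a k b m : k != 0 -> m != 0 ->
  commr (mkG a k) (mkG b m) = mkG (a * (m - 1) + b * (1 - k)) 1.
Proof.
move=> k0 m0; apply: commr_eq; rewrite ?mkG_unit // !mkG_mul.
by congr mkG; ring.
Qed.

Lemma polyF_neq0 {q} : q.[1] != 0 -> polyF q != 0.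
Proof. by move=> q0; rewrite tofrac_eq0; apply: contraNneq q0 => ->; rewrite horner0. Qed.

Lemma polyFX_sub1_neq0 : polyF 'X - 1 != 0 :> ratfun F.
Proof. by rewrite -tofrac1 -tofracB tofrac_eq0 -polyC1 polyXsubC_eq0. Qed.

Lemma inH_neq0 {h} : inH h -> h != 0.
Proof.
case=> p [q [q0 [pq ->]]]; rewrite mulf_neq0 ?invr_eq0 ?polyF_neq0 //.
by rewrite pq.
Qed.

Lemma inH_polyF {p} : p.[1] = 1 -> inH (polyF p).
Proof.
by move=> p1; exists p, 1; rewrite hornerC p1 oner_neq0 /polyF tofrac1 divr1.
Qed.

Lemma inH1 : inH (1 : ratfun F).
Proof. by rewrite -tofrac1; apply: inH_polyF; rewrite hornerC. Qed.

Lemma inHM {h h'} : inH h -> inH h' -> inH (h * h').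
Proof.
case=> p [q [q0 [pq ->]]]; case=> p' [q' [q0' [pq' ->]]].
exists (p * p'), (q * q'); rewrite !hornerM mulf_neq0 // pq pq'.
by split => //; split => //; rewrite /polyF !tofracM mulf_div.
Qed.

Lemma inHV {h} : inH h -> inH h^-1.
Proof. by case=> p [q [q0 [pq ->]]]; exists q, p; rewrite pq q0 invf_div. Qed.

Lemma inH_addsub1 {h h'} : inH h -> inH h' -> inH (h + h' - 1).
Proof.
case=> p [q [q0 [pq ->]]]; case=> p' [q' [q0' [pq' ->]]].
exists (p * q' + p' * q - q * q'), (q * q').
rewrite !(hornerD, hornerN, hornerM) mulf_neq0 // pq pq' [q'.[1] * _]mulrC addrK.
split => //; split => //; rewrite /polyF tofracB tofracD !tofracM.
have [Q Q'] := (polyF_neq0 q0, polyF_neq0 q0').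
by rewrite (addf_div _ _ Q Q') mulrBl (divff (mulf_neq0 Q Q')).
Qed.

Lemma inH_2sub {h} : inH h -> inH (1 + 1 - h).
Proof.
case=> p [q [q0 [pq ->]]]; exists (q + q - p), q.
rewrite !(hornerD, hornerN) pq addrK; split => //; split => //.
by rewrite /polyF tofracB tofracD !mulrBl mulrDl (divff (polyF_neq0 q0)).
Qed.

Lemma inG1 : inG (1 : 'M[ratfun F]_2).
Proof. by exists 0, 1; rewrite mkG01; split; first exact: inH1. Qed.

Lemma inG_mul A B : inG A -> inG B -> inG (A * B).
Proof.
move=> [f [h [Hh ->]]] [f' [h' [Hh' ->]]].
by exists (f' + f * h'), (h * h'); rewrite mkG_mul; split; first exact: inHM.
Qed.

Lemma inG_unit A : inG A -> A \is a GRing.unit.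
Proof. by move=> [f [h [Hh ->]]]; apply/mkG_unit/inH_neq0. Qed.

Lemma inG_inv A : inG A -> inG A^-1.
Proof.
move=> [f [h [Hh ->]]]; exists (- f / h), h^-1.
by rewrite mkG_inv ?inH_neq0 //; split; first exact: inHV.
Qed.

Lemma inG_translation t : inG (mkG t 1).
Proof. by exists t, 1; split; first exact: inH1. Qed.

Lemma inG_center_trivial A : inG A -> (forall B, inG B -> A * B = B * A) -> A = 1.
Proof.
move=> [a [k [Hk ->]]] central; have k0 := inH_neq0 Hk.
have commute_with b m : inH m -> a * (m - 1) + b * (1 - k) = 0.
  move=> Hm; apply: mkG_eq1; rewrite -commr_mkG ?inH_neq0 //.
  apply: commr_eq; rewrite ?mkG_unit ?inH_neq0 // mulr1.
  by apply: central; exists b, m.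
have k1 : k = 1.
  have /eqP := commute_with 1 1 inH1.
  by rewrite subrr mulr0 add0r mul1r subr_eq0 eq_sym => /eqP.
have a0 : a = 0.
  have /eqP := commute_with 0 _ (inH_polyF (hornerX 1)).
  by rewrite mul0r addr0 mulf_eq0 (negPf polyFX_sub1_neq0) orbF => /eqP.
by rewrite k1 a0 mkG01.
Qed.

Lemma twclass_mkG {b m} : inH m ->
  forall y, twclass (mkG b m) y <-> exists a k, inH k /\ y = mkG (a * (m - 1) + b * (1 - k)) 1.
Proof.
move=> Hm y; split.
  by move=> [_ [[a [k [Hk ->]]] ->]]; exists a, k; rewrite commr_mkG ?inH_neq0.
move=> [a [k [Hk ->]]]; exists (mkG a k).
by rewrite commr_mkG ?inH_neq0 //; split => //; exists a, k.
Qed.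

End AffineGroup.

Theorem mainTheorem16 (F : fieldType) :
  (* G is a group under matrix multiplication *)
  [/\ inG (1 : 'M[ratfun F]_2),
      (forall A B : 'M[ratfun F]_2, inG A -> inG B -> inG (A * B)) &
      (forall A : 'M[ratfun F]_2, inG A -> A \is a GRing.unit /\ inG A^-1)] /\
  (* the center of G is trivial *)
  (forall Z : 'M[ratfun F]_2, inG Z ->
     (forall X, inG X -> Z * X = X * Z) -> Z = 1) /\
  (* [e]_g is a subgroup of G for every g in G *)
  (forall g : 'M[ratfun F]_2, inG g ->
     [/\ (forall y, twclass g y -> inG y),
         twclass g 1,
         (forall y z, twclass g y -> twclass g z -> twclass g (y * z)) &
         (forall y, twclass g y -> twclass g y^-1)]).
Proof.
split; first by split; [exact: inG1 | exact: inG_mul | split; [exact: inG_unit | exact: inG_inv]].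
split; first exact: inG_center_trivial.
move=> _ [b [m [Hm ->]]]; have E := twclass_mkG Hm; split.
- by move=> y /E [a [k [_ ->]]]; apply: inG_translation.
- apply/E; exists 0, 1; split; first exact: inH1.
  by rewrite mul0r subrr mulr0 addr0 mkG01.
- move=> y z /E [a [k [Hk ->]]] /E [a' [k' [Hk' ->]]]; apply/E.
  exists (a + a'), (k + k' - 1); split; first exact: inH_addsub1.
  by rewrite mkG_mul mulr1; congr mkG; ring.
- move=> y /E [a [k [Hk ->]]]; apply/E.
  exists (- a), (1 + 1 - k); split; first exact: inH_2sub.
  by rewrite mkG_inv ?oner_neq0 // invr1 mulr1; congr mkG; ring.
Qed.
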